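(* Consider the symmetric matrix model $f_{i,j}(\mathbf u)=\sum_{k=1}^H u_{k,i}u_{k,j}$, $i,j\in\{1,\ldots,p\}$, with parameters $\mathbf u=(u_{k,i})\in\mathbb R^{H\times p}$, trained by gradient flow $\frac{d\mathbf u}{dt}=-\frac1T\partial_{\mathbf u}L(\mathbf u)$ on $L(\mathbf u)=\frac12\sum_{i,j=1}^p(f_{i,j}(\mathbf u)-\delta_{i=j})^2$, and write $f_{i,j}(t)=f_{i,j}(\mathbf u(t))$, $\Theta_{i,j;i',j'}(t)=\Theta_{i,j;i',j'}(\mathbf u(t))$. Then the statement ''$\Theta_{i,j;i',j'}(0)=\lim_{t\to\infty}\Theta_{i,j;i',j'}(t)$ for all $i,j,i',j'\in\{1,\ldots,p\}$'' is equivalent to the statement ''$f_{i,j}(0)=\lim_{t\to\infty}f_{i,j}(t)$ for all $i,j\in\{1,\ldots,p\}$''.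
   Context: The neural tangent kernel (NTK) of the model is $\Theta_{i,j;i',j'}(\mathbf u)=\sum_{k=1}^H\sum_{l=1}^p\frac{\partial f_{i,j}(\mathbf u)}{\partial u_{k,l}}\frac{\partial f_{i',j'}(\mathbf u)}{\partial u_{k,l}}$. *)

From HB Require Import structures.
From mathcomp Require Import all_boot all_order all_algebra.
From mathcomp Require Import all_classical all_reals all_analysis.
Set Implicit Arguments. Unset Strict Implicit. Unset Printing Implicit Defensive.
Import Order.TTheory GRing.Theory Num.Theory.
Import numFieldNormedType.Exports.
Local Open Scope ring_scope.
Local Open Scope classical_set_scope.

Section Model.
Variables (R : realType) (H p : nat).

Definition fmodel (u : 'M[R]_(H, p)) (i j : 'I_p) : R :=
  \sum_(k < H) u k i * u k j.

Definition partial (F : 'M[R]_(H, p) -> R) (u : 'M[R]_(H, p)) (k : 'I_H) (l : 'I_p) : R :=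
  derive1 (fun s : R => F (u + s *: delta_mx k l)) 0.

Definition loss (u : 'M[R]_(H, p)) : R :=
  2^-1 * \sum_(i < p) \sum_(j < p) (fmodel u i j - (i == j)%:R) ^+ 2.

Definition ntk (u : 'M[R]_(H, p)) (i j i' j' : 'I_p) : R :=
  \sum_(k < H) \sum_(l < p)
     partial (fun v => fmodel v i j) u k l * partial (fun v => fmodel v i' j') u k l.

Definition gradient_flow (T : R) (u : R -> 'M[R]_(H, p)) : Prop :=
  (forall k l, (fun t => u t k l) @ (0:R)^'+ --> u 0 k l) /\
  (forall t, 0 < t -> forall k l,
     derivable (fun s => u s k l) t 1 /\
     derive1 (fun s => u s k l) t = - T^-1 * partial loss (u t) k l).

End Model.

From HB Require Import structures.
From mathcomp Require Import all_boot all_order all_algebra.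
From mathcomp Require Import all_classical all_reals all_analysis.
From mathcomp Require Import ring.
Set Implicit Arguments.
Unset Strict Implicit.
Unset Printing Implicit Defensive.

Import Order.TTheory GRing.Theory Num.Theory.
Import numFieldNormedType.Exports.
Local Open Scope ring_scope.
Local Open Scope classical_set_scope.

(* Since f(u) is quadratic in u, the partial
   derivatives of f_{i,j} are Kronecker-delta combinations of entries of u, so
   Theta(u) is a fixed linear combination of entries of f(u); conversely
   Theta_{i,j;i,i}(u) is a nonzero multiple of f_{i,j}(u).  Each family of
   limits is therefore a linear image of the other. *)

Lemma sum_indicatorMl (R : pzSemiRingType) (I : finType) (i : I) (F : I -> R) :
  \sum_j (j == i)%:R * F j = F i.
Proof.
under eq_bigr => j _ do rewrite mulr_natl mulrb.
by rewrite -big_mkcond big_pred1_eq.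
Qed.

Lemma derive1_quadratic_at0 (R : realType) (a b c : R) :
  derive1 (fun s : R => a + s * b + s ^+ 2 * c) 0 = b.
Proof.
have -> : (fun s : R => a + s * b + s ^+ 2 * c) = horner (a%:P + b *: 'X + c *: 'X^2).
  by apply/funext => s; rewrite !hornerE /=; ring.
by rewrite -derivE !derivD !derivZ derivC derivX derivXn !hornerE.
Qed.

Lemma sum_indicator_pairM (R : comPzRingType) (I : finType) (a b c d : I)
    (x y z w : R) :
  \sum_l ((l == a)%:R * x + (l == b)%:R * y) * ((l == c)%:R * z + (l == d)%:R * w)
  = (a == c)%:R * (x * z) + (a == d)%:R * (x * w)
    + (b == c)%:R * (y * z) + (b == d)%:R * (y * w).
Proof.
have expand (l : I) :
    ((l == a)%:R * x + (l == b)%:R * y) * ((l == c)%:R * z + (l == d)%:R * w)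
    = (l == a)%:R * ((l == c)%:R * (x * z)) + (l == a)%:R * ((l == d)%:R * (x * w))
    + (l == b)%:R * ((l == c)%:R * (y * z)) + (l == b)%:R * ((l == d)%:R * (y * w)).
  by ring.
rewrite (eq_bigr _ (fun l _ => expand l)) !big_split /=.
by rewrite !sum_indicatorMl.
Qed.

Section SymmetricMatrixModel.
Variables (R : realType) (H p : nat).
Implicit Types (u : 'M[R]_(H, p)) (k : 'I_H).

Lemma fmodelC u i j : fmodel u i j = fmodel u j i.
Proof. by apply: eq_bigr => k _; rewrite mulrC. Qed.

Lemma fmodel_shift u k l i j (s : R) :
  fmodel (u + s *: delta_mx k l) i j =
  fmodel u i j + s * ((l == i)%:R * u k j + (l == j)%:R * u k i)
    + s ^+ 2 * ((l == i)%:R * (l == j)%:R).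
Proof.
set a := fun m : 'I_H => (m == k)%:R : R.
have expand m : (u + s *: delta_mx k l) m i * (u + s *: delta_mx k l) m j =
    u m i * u m j + s * (a m * ((l == i)%:R * u m j + (l == j)%:R * u m i))
    + s ^+ 2 * (a m * (a m * ((l == i)%:R * (l == j)%:R))).
  by rewrite !mxE -!mulnb !natrM /a !(eq_sym l); ring.
rewrite /fmodel (eq_bigr _ (fun m _ => expand m)) !big_split -!mulr_sumr /=.
by rewrite !sum_indicatorMl /a eqxx !mul1r.
Qed.

Lemma partial_fmodel u i j k l :
  partial (fun v => fmodel v i j) u k l = (l == i)%:R * u k j + (l == j)%:R * u k i.
Proof.
rewrite /partial (funext (fun s => fmodel_shift u k l i j s)).
exact: derive1_quadratic_at0.
Qed.

Lemma ntkE u i j i' j' :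
  ntk u i j i' j' =
  (i == i')%:R * fmodel u j j' + (i == j')%:R * fmodel u j i'
  + (j == i')%:R * fmodel u i j' + (j == j')%:R * fmodel u i i'.
Proof.
rewrite /ntk.
under eq_bigr => k _ do rewrite (eq_bigr _ (fun l _ => congr2 *%R
  (partial_fmodel u i j k l) (partial_fmodel u i' j' k l))) sum_indicator_pairM.
by rewrite !big_split -!mulr_sumr.
Qed.

Lemma ntk_diag u i j : ntk u i j i i = 2 * (1 + (i == j)%:R) * fmodel u i j.
Proof.
rewrite ntkE eqxx (fmodelC u j i).
by case: eqVneq => [<-|_] /=; ring.
Qed.

Lemma fmodel_ntk u i j :
  fmodel u i j = (2 * (1 + (i == j)%:R))^-1 * ntk u i j i i.
Proof. by rewrite ntk_diag mulrA mulVf ?mul1r // mulf_neq0 // lt0r_neq0 // ltr_wpDr. Qed.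

End SymmetricMatrixModel.

Theorem proposition2 (R : realType) (H p : nat) (T : R) (u : R -> 'M[R]_(H, p)) :
  0 < T -> gradient_flow T u ->
  ((forall i j i' j' : 'I_p,
      ntk (u t) i j i' j' @[t --> +oo] --> ntk (u 0) i j i' j')
   <->
   (forall i j : 'I_p, fmodel (u t) i j @[t --> +oo] --> fmodel (u 0) i j)).
Proof.
move=> _ _; split => [ntk_cvg i j | fmodel_cvg i j i' j'].
- rewrite (funext (fun t => fmodel_ntk (u t) i j)) fmodel_ntk.
  exact: cvgMl_tmp (ntk_cvg i j i i).
- rewrite (funext (fun t => ntkE (u t) i j i' j')) ntkE.
  by do 3 ?apply: cvgD; apply: cvgMl_tmp; apply: fmodel_cvg.
Qed.
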